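(* Let $L$ be a finite list of boxes in $(0,1]^3$, let $k\ge2$ and $c\ge 2$ be integers, and run Steps 1–2 of algorithm 3SSP (described in the context) with parameters $k,c$. For $q=1,\dots,k$ let $w^q_1\ge w^q_2\ge\dots\ge w^q_{m^q}$ be the widths of the $m^q$ segments of type $q$ (segments containing items of group $G_q$), in the order they were opened. Let $g$ be the function (defined in the context) associated with a feasible solution $\bar\pi$ of the dual fractional bin packing LP for the instance $I(L)$ satisfying $\bar\pi_1\ge\dots\ge\bar\pi_p$, and let $G^q=\sum_{i=1}^{m^q} g(w^q_i)$. Then $$W(L) > (c-1)\sum_{q=1}^k G^q - ck,$$ where $W(L)=\sum_{R\in L} f_k(l(R))\,g(w(R))\,h(R)$.
   Context: Boxes $R=(l(R),w(R),h(R))$ (length, width, height). Algorithm 3SSP, Steps 1–2: partition $L$ into $G_1,\dots,G_k$, where for $i<k$, $G_i$ is the set of boxes of length in $(\frac1{i+1},\frac1i]$ and $G_k$ the set of boxes of length in $(0,\frac1k]$. Sort each group by non-increasing width. GNF (for $G_i$, $i<k$): while items remain, open a segment of size $(1,w_y,c)$ with $w_y$ the width of the first remaining item, divide it into $i$ slips of size $(\frac1i,w_y,c)$, and pack the remaining items in order into the slips by Next Fit with respect to height (stack in the current slip while total height $\le c$, else close it and move to the next slip); when all slips are closed, repeat. GNFDH (for $G_k$): while items remain, open a segment of size $(1,w_y,c)$ with $w_y$ the width of the first remaining item, find the maximal $j$ such that the first $j$ remaining items fit, ignoring widths, in the $1\times c$ length–height face by NFDH (sort by non-increasing height, pack in levels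 left to right, opening a new level on top when needed), pack them so, and repeat. $I(L)$ is the list of widths of all segments. Fractional bin packing: for a 1D instance with distinct sizes $s_1>s_2>\dots>s_p$ in $(0,1]$, a feasible pattern is a nonnegative integer vector $v=(v_1,\dots,v_p)$ with $\sum_j v_js_j\le1$. The dual LP is: maximize $\sum_j n_j\pi_j$ subject to $\sum_j v_j\pi_j\le1$ for every feasible pattern $v$ and $\pi\ge0$ ($n_j$ the multiplicity of size $s_j$). Given a feasible dual solution $\bar\pi$ with $\bar\pi_1\ge\dots\ge\bar\pi_p$, set $\bar\pi_{p+1}=0$, $s_0=1$, $s_{p+1}=0$ and define $g(0)=0$, $g(x)=\bar\pi_j$ for $x\in[s_j,s_{j-1})$ ($1\le j\le p+1$), and $g(1)=\bar\pi_1$. Weighting function: $f_k(x)=\frac1t$ if $\frac1{t+1}<x\le\frac1t$ with $1\le t<k$, and $f_k(x)=\frac{kx}{k-1}$ if $0<x\le\frac1k$. *)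

From HB Require Import structures.
From mathcomp Require Import all_boot all_order all_algebra.
From mathcomp Require Import reals.
Set Implicit Arguments. Unset Strict Implicit. Unset Printing Implicit Defensive.
Import Order.TTheory GRing.Theory Num.Theory.
Local Open Scope ring_scope.

Section ThreeSSP.
Variable R : realType.

Definition box := (R * R * R)%type.
Definition bl (b : box) : R := b.1.1.
Definition bw (b : box) : R := b.1.2.
Definition bh (b : box) : R := b.2.

(* State: current slip index j (0-based, j < i) and current stacked height cur.
   Output: widths of newly opened segments, in opening order. *)
Fixpoint gnf_aux (i : nat) (c : R) (s : seq box) (j : nat) (cur : R) : seq R :=
  match s with
  | [::] => [::]
  | x :: s' =>
      if cur + bh x <= c then gnf_aux i c s' j (cur + bh x)
      else if (j.+1 < i)%N then gnf_aux i c s' j.+1 (bh x)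
      else bw x :: gnf_aux i c s' 0 (bh x)
  end.

Definition gnf (i : nat) (c : R) (s : seq box) : seq R :=
  match s with
  | [::] => [::]
  | x :: s' => bw x :: gnf_aux i c s' 0 (bh x)
  end.

(* Items packed in the given order into levels of length 1; a new level is opened
   on top when the next item does not fit; the level height is the height of its
   first item (the list is sorted by non-increasing height before calling). *)
Fixpoint nfdh_aux (s : seq box) (cur : R) : R :=
  match s with
  | [::] => 0
  | x :: s' => if cur + bl x <= 1 then nfdh_aux s' (cur + bl x)
               else bh x + nfdh_aux s' (bl x)
  end.

Definition nfdh_height (s : seq box) : R :=
  match s with
  | [::] => 0
  | x :: s' => bh x + nfdh_aux s' (bl x)
  end.

(* srtH : a sorting function by non-increasing height (tie-breaking arbitrary). *)
Definition nfdh_fits (srtH : seq box -> seq box) (c : R) (s : seq box) : bool :=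
  nfdh_height (srtH s) <= c.

Definition gnfdh_take (srtH : seq box -> seq box) (c : R) (s : seq box) : nat :=
  (\max_(j < (size s).+1 | nfdh_fits srtH c (take j s)) (j : nat))%N.

(* fuel = size s suffices since at least one item is removed at each step
   (the maxn 1 is never active for boxes in (0,1]^3 and c >= 1). *)
Fixpoint gnfdh_aux (srtH : seq box -> seq box) (c : R) (fuel : nat) (s : seq box)
  : seq R :=
  match fuel with
  | 0 => [::]
  | fuel'.+1 =>
      match s with
      | [::] => [::]
      | x :: _ => bw x :: gnfdh_aux srtH c fuel' (drop (maxn 1 (gnfdh_take srtH c s)) s)
      end
  end.

Definition gnfdh (srtH : seq box -> seq box) (c : R) (s : seq box) : seq R :=
  gnfdh_aux srtH c (size s) s.

Definition group (k : nat) (L : seq box) (q : nat) : seq box :=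
  if (q < k)%N then [seq b <- L | ((q.+1)%:R)^-1 < bl b <= (q%:R)^-1]
  else [seq b <- L | bl b <= (k%:R)^-1].

(* ---------- Step 2: widths of the segments of type q, in opening order.
   srtW sorts a group by non-increasing width. *)
Definition segments (srtW srtH : seq box -> seq box) (k c : nat) (L : seq box)
  (q : nat) : seq R :=
  if (q < k)%N then gnf q c%:R (srtW (group k L q))
  else gnfdh srtH c%:R (srtW (group k L q)).

Definition IL (srtW srtH : seq box -> seq box) (k c : nat) (L : seq box) : seq R :=
  flatten [seq segments srtW srtH k c L q | q <- iota 1 k].

(* distinct sizes s_1 > s_2 > ... > s_p, stored 0-based: (sizes I)`_(j-1) = s_j *)
Definition sizes (I : seq R) : seq R := sort (fun a b => b < a) (undup I).

(* pi is 0-based as well: pi (j-1) = \bar\pi_j, j = 1..p *)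
Definition dual_feasible (I : seq R) (pi : nat -> R) : Prop :=
  (forall j, (j < size (sizes I))%N -> 0 <= pi j) /\
  (forall v : nat -> nat,
     \sum_(j < size (sizes I)) (v j)%:R * (sizes I)`_j <= 1 ->
     \sum_(j < size (sizes I)) (v j)%:R * pi j <= 1).

Definition dual_nonincreasing (I : seq R) (pi : nat -> R) : Prop :=
  forall j, (j.+1 < size (sizes I))%N -> pi j.+1 <= pi j.

(* g(1) = pi_1; otherwise g(x) = pi_j for x in [s_j, s_{j-1}) (s_0 = 1),
   i.e. j is the first index with s_j <= x; g = pi_{p+1} = 0 below s_p
   (in particular g(0) = 0). *)
Definition gfun (I : seq R) (pi : nat -> R) (x : R) : R :=
  if x == 1 then pi 0%N
  else let j := find (fun s => s <= x) (sizes I) in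
       if (j < size (sizes I))%N then pi j else 0.

Definition fk (k : nat) (x : R) : R :=
  if (0 < x) && (x <= (k%:R)^-1) then k%:R * x / (k%:R - 1)
  else \sum_(1 <= t < k) (if ((t.+1)%:R)^-1 < x <= (t%:R)^-1 then (t%:R)^-1 else 0).

Definition Wgt (k : nat) (g : R -> R) (L : seq box) : R :=
  \sum_(b <- L) fk k (bl b) * g (bw b) * bh b.

End ThreeSSP.

From HB Require Import structures.
From mathcomp Require Import all_boot all_order all_algebra.
From mathcomp Require Import reals.
From mathcomp Require Import ring lra zify.
Import Order.TTheory GRing.Theory Num.Theory.
Local Open Scope ring_scope.
Set Implicit Arguments. Unset Strict Implicit. Unset Printing Implicit Defensive.

(* W is additive over the groups G_1, ..., G_k, so it suffices to show
   W(G_q) >= (c - 1) (G^q - 1) for every q; summing gives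
   W >= (c - 1) sum_q G^q - k (c - 1) > (c - 1) sum_q G^q - c k.
   Inside a group the boxes come by non-increasing width and g is
   non-decreasing, so every box weighs at least g of the width of any later
   segment.  When GNF (q < k) closes a segment, each of its q slips is filled
   to height > c - 1 and f_k >= 1/q on G_q, so the segment pays (c - 1) g(w')
   for the width w' of the next one.  When GNFDH closes a segment, its boxes
   plus the next box overflow height c under NFDH; as lengths are at most 1/k,
   an NFDH packing of height H has area at least (1 - 1/k) (H - 1) even after
   removing any one box, and f_k(l) = k l / (k - 1) turns this area into the
   same payment.  Only the first segment of each group is unpaid, and g <= 1
   by dual feasibility of the one-box patterns. *)

Section Weighting.
Variable R : realType.

Section SortedNonincreasing.
Variables (T : eqType) (f : T -> R).

Let ge_f_trans : transitive (fun a b => f b <= f a).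
Proof. by move=> a b d ab ad; apply: le_trans ab. Qed.

Lemma sorted_head_ge x s y :
  sorted (fun a b => f b <= f a) (x :: s) -> y \in s -> f y <= f x.
Proof. by move=> /(order_path_min ge_f_trans)/allP; apply. Qed.

Lemma sorted_take_drop_ge s t a b :
  sorted (fun a b => f b <= f a) s -> a \in take t s -> b \in drop t s -> f b <= f a.
Proof.
rewrite (sorted_pairwise ge_f_trans) -{1}(cat_take_drop t s) pairwise_cat.
by case/and3P=> /allrelP + _ _; apply.
Qed.

End SortedNonincreasing.

Section DualSolution.
Variables (I : seq R) (pi : nat -> R).
Hypothesis feasible : dual_feasible I pi.
Hypothesis sizes_gt0 : (0 < size (sizes I))%N.

Lemma dual_le1 : {in sizes I, forall s, s <= 1} ->
  forall j, (j < size (sizes I))%N -> pi j <= 1.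
Proof.
move=> sizes_le1 j lt_j; have [_ /(_ (fun i => (i == j) : nat))] := feasible.
have unit_pattern (F : nat -> R) :
    \sum_(i < size (sizes I)) ((i : nat) == j)%:R * F i = F j.
  by under eq_bigr do rewrite mulr_natl mulrb; rewrite -big_mkcond big_ord1_eq lt_j.
by rewrite !unit_pattern; apply; apply/sizes_le1/mem_nth.
Qed.

Lemma gfun_ge0 x : 0 <= gfun I pi x.
Proof.
have [pi_ge0 _] := feasible.
by rewrite /gfun; case: ifP => _; [exact: pi_ge0 | case: ifP => // /pi_ge0].
Qed.

Lemma gfun_le1 x : {in sizes I, forall s, s <= 1} -> gfun I pi x <= 1.
Proof.
move=> /dual_le1 pi_le1; rewrite /gfun; case: ifP => _; first exact: pi_le1.
by case: ifP => [/pi_le1 | _] //; exact: ler01.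
Qed.

Lemma gfun_homo x y : dual_nonincreasing I pi -> x <= y -> y <= 1 ->
  gfun I pi x <= gfun I pi y.
Proof.
move=> noninc le_xy y_le1.
have pi_antimono j j' : (j <= j')%N -> (j' < size (sizes I))%N -> pi j' <= pi j.
  elim: j' => [|j' IH]; first by rewrite leqn0 => /eqP ->.
  rewrite leq_eqVlt => /orP [/eqP <- //| lt_jj'] lt_j'.
  exact: le_trans (noninc _ lt_j') (IH lt_jj' (ltnW lt_j')).
rewrite /gfun; have [y1 | y_neq1] := eqVneq y 1.
  case: ifP => _ //; case: ifP => [/(pi_antimono _ _ (leq0n _)) //| _].
  by case: feasible => /(_ 0%N sizes_gt0).
have -> : (x == 1) = false.
  by apply: contraNF y_neq1 => /eqP x1; rewrite eq_le y_le1 -x1 le_xy.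
case: ifP => lt_fx; last by have := gfun_ge0 y; rewrite /gfun (negbTE y_neq1).
have le_f : (find (<=%R^~ y) (sizes I) <= find (<=%R^~ x) (sizes I))%N.
  by apply: sub_find => s /= /le_trans; apply.
by rewrite (leq_ltn_trans le_f lt_fx); exact: pi_antimono.
Qed.

End DualSolution.

Definition area (s : seq (box R)) : R := \sum_(b <- s) bl b * bh b.

Definition short (K : R) (b : box R) : bool :=
  [&& 0 <= bl b, K * bl b <= 1 & 0 <= bh b].

Section NFDH.
Variable K : R.
Hypothesis K_ge1 : 1 <= K.

Let K_ge0 : 0 <= K. Proof. exact: le_trans ler01 K_ge1. Qed.

Lemma overflow_credit h u v : 0 <= h -> 1 < u + v -> K * v <= 1 ->
  (K - 1) * h <= K * (u * h).
Proof.
move=> h0 uv Kv.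
have over_ge0 : 0 <= u + v - 1 by lra.
have lent_ge0 : 0 <= 1 - K * v by lra.
have := mulr_ge0 (mulr_ge0 K_ge0 h0) over_ge0; have := mulr_ge0 h0 lent_ge0.
rewrite !mulrDr !mulrDl; lra.
Qed.

(* [a] is area credit from the open level and [d] the length of a box of the
   open level lent to the previous one: a closed level, minus the box it lent,
   plus the first box of the next level, has length > 1 - 1/K. *)
Lemma nfdh_aux_area s cur a d :
  sorted (fun u v => bh v <= bh u) s -> all (short K) s ->
  K * d <= 1 -> 0 <= a -> all (fun z => (cur - d) * bh z <= a) s ->
  (K - 1) * nfdh_aux s cur <= K * (a + area s).
Proof.
elim: s cur a d => [|x s IH] cur a d.
  by move=> _ _ _ a0 _; rewrite /= /area big_nil addr0 mulr0 mulr_ge0.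
move=> srt /= /andP [/and3P [lx0 Klx hx0] short_s] Kd a0 /andP [cred_x cred_s].
have srt_s := path_sorted srt.
have le_hx z : z \in s -> bh z <= bh x := sorted_head_ge srt.
rewrite /area big_cons -/(area s); case: ifP => fit.
  rewrite addrA; apply: (IH _ _ d) => //; first by apply: addr_ge0 => //; exact: mulr_ge0.
  apply/allP => z zs; have := allP cred_s z zs.
  have := ler_wpM2l lx0 (le_hx z zs); rewrite !mulrDl; lra.
have cred0 : all (fun z => (bl x - bl x) * bh z <= 0) s.
  by apply/allP => z _; rewrite subrr mul0r.
have := IH (bl x) 0 (bl x) srt_s short_s Klx (lexx 0) cred0.
have over : 1 < cur - d + bl x + d by rewrite addrAC subrK ltNge fit.
have := overflow_credit hx0 over Kd.
have := ler_wpM2l K_ge0 cred_x.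
rewrite add0r !mulrDr !mulrDl; lra.
Qed.

(* No box is lent before [y]; the gap left by removing [y] is filled by
   borrowing the first box of the next level, and so on. *)
Lemma nfdh_aux_area_rem s y cur a :
  sorted (fun u v => bh v <= bh u) s -> all (short K) s -> y \in s ->
  0 <= a -> all (fun z => cur * bh z <= a) s ->
  (K - 1) * nfdh_aux s cur <= K * (a + area s - bl y * bh y).
Proof.
elim: s cur a => [//|x s IH] cur a.
move=> srt /= /andP [/and3P [lx0 Klx hx0] short_s] y_in a0 /andP [cred_x cred_s].
have srt_s := path_sorted srt.
have le_hx z : z \in s -> bh z <= bh x := sorted_head_ge srt.
have cred_Kx : K * (cur * bh x) <= K * a := ler_wpM2l K_ge0 cred_x.
rewrite /area big_cons -/(area s).
have [<- | x_neq_y] := eqVneq x y.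
  case: ifP => fit.
    have cred_s' : all (fun z => (cur + bl x - bl x) * bh z <= a) s by rewrite addrK.
    have := nfdh_aux_area srt_s short_s Klx a0 cred_s'; lra.
  have cred0 : all (fun z => (bl x - bl x) * bh z <= 0) s.
    by apply/allP => z _; rewrite subrr mul0r.
  have := nfdh_aux_area srt_s short_s Klx (lexx 0) cred0.
  have over : 1 < cur + bl x by rewrite ltNge fit.
  have := overflow_credit hx0 over Klx; rewrite mulrDr; lra.
have {}y_in : y \in s by move: y_in; rewrite inE eq_sym (negbTE x_neq_y).
case: ifP => fit.
  have cred_s' : all (fun z => (cur + bl x) * bh z <= a + bl x * bh x) s.
    apply/allP => z zs; have := allP cred_s z zs.
    have := ler_wpM2l lx0 (le_hx z zs); rewrite mulrDl; lra.
  have := IH _ _ srt_s short_s y_in (addr_ge0 a0 (mulr_ge0 lx0 hx0)) cred_s'; lra.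
have cred_s' : all (fun z => bl x * bh z <= bl x * bh x) s.
  by apply/allP => z zs; rewrite ler_wpM2l // le_hx.
have := IH _ _ srt_s short_s y_in (mulr_ge0 lx0 hx0) cred_s'.
have over : 1 < cur + bl x by rewrite ltNge fit.
have := overflow_credit hx0 over Klx; rewrite mulrDr; lra.
Qed.

Lemma nfdh_height_area_rem u T y :
  sorted (fun u v => bh v <= bh u) (u :: T) -> all (short K) (u :: T) ->
  y \in u :: T ->
  (K - 1) * (nfdh_height (u :: T) - bh u) <= K * (area (u :: T) - bl y * bh y).
Proof.
move=> srt short_uT y_in; have /and3P [lu0 Klu _] := allP short_uT u (mem_head _ _).
have cred0 : all (fun z => 0 * bh z <= 0) (u :: T).
  by apply/allP => z _; rewrite mul0r.
have := nfdh_aux_area_rem srt short_uT y_in (lexx 0) cred0.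
have fit : 0 + bl u <= 1.
  by rewrite add0r; apply: le_trans Klu; rewrite ler_peMl.
by rewrite /= fit !add0r /nfdh_height [bh u + _]addrC addrK.
Qed.

End NFDH.

Lemma all_take_drop (T : Type) (P : pred T) t s :
  all P s = all P (take t s) && all P (drop t s).
Proof. by rewrite -all_cat cat_take_drop. Qed.

Section GNFDH.
Variables (srtH : seq (box R) -> seq (box R)) (c K : R) (g : R -> R).
Hypothesis srtH_spec :
  forall s, perm_eq (srtH s) s /\ sorted (fun a b => bh b <= bh a) (srtH s).
Hypothesis c_ge1 : 1 <= c.
Hypothesis K_ge1 : 1 <= K.

Lemma gnfdh_take_gt0 x s : bh x <= c -> (0 < gnfdh_take srtH c (x :: s))%N.
Proof.
move=> hx; rewrite /gnfdh_take.
apply: leq_trans (leq_bigmax_cond (Ordinal (isT : 1 < (size (x :: s)).+1)%N) _) => //=.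
by rewrite /nfdh_fits take0 (perm_small_eq _ (proj1 (srtH_spec [:: x]))) //= addr0.
Qed.

Lemma gnfdh_take_overflow s : (gnfdh_take srtH c s < size s)%N ->
  ~~ nfdh_fits srtH c (take (gnfdh_take srtH c s).+1 s).
Proof.
move=> lt_t; apply/negP => fits.
have lt_t' : ((gnfdh_take srtH c s).+1 < (size s).+1)%N by [].
have := @leq_bigmax_cond _ (fun j : 'I_(size s).+1 => nfdh_fits srtH c (take j s))
  (fun j => j : nat) (Ordinal lt_t') fits.
by rewrite -/(gnfdh_take srtH c s) ltnn.
Qed.

Lemma gnfdh_segment_area s z r :
  all (short K) s -> all (fun b => bh b <= 1) s ->
  drop (gnfdh_take srtH c s) s = z :: r ->
  (K - 1) * (c - 1) <= K * area (take (gnfdh_take srtH c s) s).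
Proof.
move=> short_s h_le1 s_drop.
have lt_t : (gnfdh_take srtH c s < size s)%N.
  by rewrite ltnNge -subn_eq0 -size_drop s_drop.
have := gnfdh_take_overflow lt_t; move: s_drop lt_t.
move: (gnfdh_take srtH c s) => t s_drop lt_t; rewrite /nfdh_fits -ltNge => over.
have s_eq : s = take t s ++ z :: r by rewrite -s_drop cat_take_drop.
have take_t1 : take t.+1 s = take t s ++ [:: z].
  have nth_t : nth z s t = z by rewrite -[t]addn0 -nth_drop s_drop.
  by rewrite (take_nth z lt_t) nth_t cats1.
move: over; rewrite take_t1; set S := take t s.
have [perm_P] := srtH_spec (S ++ [:: z]).
case: (srtH _) perm_P => [/perm_size | u T perm_P srt_P over].
  by rewrite size_cat addn1.
have short_P : all (short K) (u :: T).
  rewrite (perm_all _ perm_P) all_cat /= andbT.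
  by move: short_s; rewrite s_eq all_cat /= => /and3P [-> ->].
have z_in : z \in u :: T by rewrite (perm_mem perm_P) mem_cat mem_head orbT.
have hu_le1 : bh u <= 1.
  apply: (allP h_le1); rewrite s_eq -cat_rcons -cats1 mem_cat.
  by rewrite -(perm_mem perm_P) mem_head.
have := nfdh_height_area_rem K_ge1 srt_P short_P z_in.
rewrite /area (perm_big _ perm_P) big_cat big_seq1 addrK -/(area S).
have lt_ch : c - 1 < nfdh_height (u :: T) - bh u by lra.
have K1_ge0 : 0 <= K - 1 by rewrite subr_ge0.
have := ler_wpM2l K1_ge0 (ltW lt_ch); lra.
Qed.

Lemma gnfdh_segment_weight s z r :
  all (short K) s -> all (fun b => bh b <= 1) s -> 0 <= g (bw z) ->
  sorted (fun a b => g (bw b) <= g (bw a)) s ->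
  drop (gnfdh_take srtH c s) s = z :: r ->
  (K - 1) * (c - 1) * g (bw z) <=
    K * \sum_(b <- take (gnfdh_take srtH c s) s) bl b * bh b * g (bw b).
Proof.
move=> short_s h_le1 gz0 srt s_drop.
apply: le_trans (ler_wpM2r gz0 (gnfdh_segment_area short_s h_le1 s_drop)) _.
rewrite -mulrA ler_wpM2l ?(le_trans ler01 K_ge1) // /area mulr_suml.
rewrite big_seq [X in _ <= X]big_seq; apply: ler_sum => b b_take.
have /and3P [lb0 _ hb0] := allP short_s b (mem_take b_take).
rewrite ler_wpM2l ?mulr_ge0 //.
apply: (sorted_take_drop_ge (f := fun b => g (bw b)) srt b_take).
by rewrite s_drop mem_head.
Qed.

(* Each segment is paid by the boxes of the previous one; the first segment of
   [s] is not. *)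
Lemma gnfdh_aux_bound fuel s :
  all (short K) s -> all (fun b => bh b <= 1) s -> all (fun b => 0 <= g (bw b)) s ->
  sorted (fun a b => g (bw b) <= g (bw a)) s ->
  (K - 1) * (c - 1) * \sum_(w <- gnfdh_aux srtH c fuel s) g w <=
    K * \sum_(b <- s) bl b * bh b * g (bw b) +
    (K - 1) * (c - 1) * (if s is x :: _ then g (bw x) else 0).
Proof.
have Kc_ge0 : 0 <= (K - 1) * (c - 1) by apply: mulr_ge0; rewrite subr_ge0.
have weight_ge0 s' : all (short K) s' -> all (fun b => 0 <= g (bw b)) s' ->
    0 <= K * \sum_(b <- s') bl b * bh b * g (bw b).
  move=> /allP short_s' /allP g_s'; rewrite big_seq mulr_sumr; apply: sumr_ge0 => b bs.
  have /and3P [lb0 _ hb0] := short_s' b bs.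
  by rewrite !mulr_ge0 ?(le_trans ler01 K_ge1) ?g_s'.
elim: fuel s => [|fuel IH] [|x s] short_s h_le1 g_s srt;
  rewrite /= ?big_nil ?mulr0 ?addr0 //.
  by apply: addr_ge0; [exact: weight_ge0 | apply: mulr_ge0 => //; case/andP: g_s].
have hx_le1 : bh x <= 1 by case/andP: h_le1.
have seg z r := @gnfdh_segment_weight (x :: s) z r short_s h_le1.
move: seg; rewrite (maxn_idPr (gnfdh_take_gt0 s (le_trans hx_le1 c_ge1))).
move: (gnfdh_take srtH c (x :: s)) => t seg.
have split_sum : \sum_(b <- x :: s) bl b * bh b * g (bw b) =
    \sum_(b <- take t (x :: s)) bl b * bh b * g (bw b) +
    \sum_(b <- drop t (x :: s)) bl b * bh b * g (bw b).
  by rewrite -big_cat cat_take_drop.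
rewrite big_cons split_sum.
move: short_s; rewrite (all_take_drop _ t) => /andP [short_take short_drop].
move: h_le1; rewrite (all_take_drop _ t) => /andP [_ h_drop].
move: g_s; rewrite (all_take_drop _ t) => /andP [g_take g_drop].
have := IH _ short_drop h_drop g_drop (drop_sorted t srt).
have := weight_ge0 _ short_take g_take.
case E: (drop t (x :: s)) seg => [|z r] seg; rewrite ?big_nil ?mulr0.
  rewrite !mulrDr; lra.
have gz0 : 0 <= g (bw z) by apply: (allP g_drop); rewrite E mem_head.
have := seg z r gz0 srt erefl; rewrite !mulrDr; lra.
Qed.

Lemma gnfdh_bound s :
  all (short K) s -> all (fun b => bh b <= 1) s -> all (fun b => 0 <= g (bw b)) s ->
  all (fun b => g (bw b) <= 1) s -> sorted (fun a b => g (bw b) <= g (bw a)) s ->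
  (K - 1) * (c - 1) * (\sum_(w <- gnfdh srtH c s) g w - 1) <=
    K * \sum_(b <- s) bl b * bh b * g (bw b).
Proof.
move=> short_s h_le1 g_s g_le1 srt.
have Kc_ge0 : 0 <= (K - 1) * (c - 1) by apply: mulr_ge0; rewrite subr_ge0.
have := gnfdh_aux_bound (size s) short_s h_le1 g_s srt; rewrite /gnfdh.
case: s short_s h_le1 g_s g_le1 srt => [|x s] _ _ _ g_le1 _.
  by rewrite /= !big_nil !mulr0 addr0 sub0r mulrN1 oppr_le0.
have := ler_wpM2l Kc_ge0 (allP g_le1 x (mem_head _ _)); rewrite mulrBr mulr1; lra.
Qed.

End GNFDH.

Section GNF.
Variables (q : nat) (c : R) (g : R -> R).

(* [D] is the weight of the open segment: [j] full slips of height > c - 1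
   and the current slip of height [cur]. *)
Lemma gnf_aux_bound s j cur D :
  (j < q)%N -> all (fun b => 0 <= bh b <= 1) s -> all (fun b => 0 <= g (bw b)) s ->
  sorted (fun a b => g (bw b) <= g (bw a)) s -> 0 <= D ->
  all (fun y => (j%:R * (c - 1) + cur) * g (bw y) <= D) s ->
  q%:R * (c - 1) * \sum_(w <- gnf_aux q c s j cur) g w <=
    D + \sum_(b <- s) g (bw b) * bh b.
Proof.
elim: s j cur D => [|x s IH] j cur D lt_jq; first by rewrite /= !big_nil mulr0 addr0.
move=> /= /andP [/andP [hx0 hx1] h_s] /andP [gx0 g_s] srt D0 /andP [cred_x cred_s].
have srt_s := path_sorted srt.
have own_credit y : y \in s -> bh x * g (bw y) <= g (bw x) * bh x.
  move=> ys; rewrite mulrC ler_wpM2r //.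
  exact: (sorted_head_ge (f := fun b => g (bw b)) srt).
have D'_ge0 : 0 <= D + g (bw x) * bh x by rewrite addr_ge0 ?mulr_ge0.
rewrite big_cons addrA; case: ifP => fit.
  apply: IH => //; apply/allP => y ys.
  have := allP cred_s y ys; have := own_credit y ys; rewrite mulrDl; lra.
have full : c - 1 <= cur.
  have : c < cur + bh x by rewrite ltNge fit.
  lra.
case: ifP => next_slip.
  apply: IH => //; apply/allP => y ys.
  have := allP cred_s y ys; have := own_credit y ys.
  have := mulr_ge0 (allP g_s y ys) (_ : 0 <= cur - (c - 1)); rewrite subr_ge0 => /(_ full).
  rewrite -natr1 !mulrDl !mulrDr; lra.
have q_eq : q = j.+1 by apply/eqP; rewrite eqn_leq lt_jq leqNgt next_slip.
have close : q%:R * (c - 1) * g (bw x) <= D.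
  by apply: le_trans cred_x; rewrite ler_wpM2r // q_eq -natr1 mulrDl mul1r lerD2l.
have cred_s' : all (fun y => (0%:R * (c - 1) + bh x) * g (bw y) <= g (bw x) * bh x) s.
  by apply/allP => y ys; rewrite mul0r add0r own_credit.
have q_gt0 : (0 < q)%N by rewrite q_eq.
have := IH 0%N (bh x) _ q_gt0 h_s g_s srt_s (mulr_ge0 gx0 hx0) cred_s'.
rewrite big_cons mulrDr; lra.
Qed.

Lemma gnf_bound s :
  (0 < q)%N -> 1 <= c -> all (fun b => 0 <= bh b <= 1) s ->
  all (fun b => 0 <= g (bw b)) s -> all (fun b => g (bw b) <= 1) s ->
  sorted (fun a b => g (bw b) <= g (bw a)) s ->
  q%:R * (c - 1) * (\sum_(w <- gnf q c s) g w - 1) <= \sum_(b <- s) g (bw b) * bh b.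
Proof.
move=> q_gt0 c_ge1 h_s g_s g_le1 srt.
have qc_ge0 : 0 <= q%:R * (c - 1) by rewrite mulr_ge0 ?subr_ge0.
case: s h_s g_s g_le1 srt => [|x s]; first by rewrite /= !big_nil sub0r mulrN1 oppr_le0.
move=> /= /andP [/andP [hx0 _] h_s] /andP [gx0 g_s] /andP [gx1 _] srt.
have cred_s : all (fun y => (0%:R * (c - 1) + bh x) * g (bw y) <= g (bw x) * bh x) s.
  apply/allP => y ys; rewrite mul0r add0r mulrC ler_wpM2r //.
  exact: (sorted_head_ge (f := fun b => g (bw b)) srt).
have aux_bound := gnf_aux_bound q_gt0 h_s g_s (path_sorted srt) (mulr_ge0 gx0 hx0) cred_s.
have qgx := ler_wpM2l qc_ge0 gx1.
rewrite !big_cons mulrBr mulrDr mulr1; lra.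
Qed.

End GNF.

Lemma fk_small k (x : R) : 0 < x -> x <= k%:R^-1 -> fk k x = k%:R * x / (k%:R - 1).
Proof. by move=> x_gt0 x_le; rewrite /fk x_gt0 x_le. Qed.

Lemma fk_ge_inv k q (x : R) : (1 <= q < k)%N -> q.+1%:R^-1 < x <= q%:R^-1 ->
  q%:R^-1 <= fk k x.
Proof.
move=> /andP [q_gt0 lt_qk] /andP [lt_x le_x]; rewrite /fk.
have -> : (0 < x) && (x <= k%:R^-1) = false.
  apply/negbTE; rewrite negb_and -ltNge; apply/orP; right; apply: le_lt_trans lt_x.
  by rewrite lef_pV2 ?posrE ?ltr0n ?ler_nat //; apply: leq_trans lt_qk.
have q_in : q \in index_iota 1 k by rewrite mem_index_iota q_gt0.
rewrite (bigD1_seq q q_in (iota_uniq _ _)) /= lt_x le_x lerDl.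
by apply: sumr_ge0 => t _; case: ifP => // _; rewrite invr_ge0 ler0n.
Qed.

Lemma gnf_fk_bound k q c (g : R -> R) s :
  (1 <= q < k)%N -> 1 <= c ->
  all (fun b => q.+1%:R^-1 < bl b <= q%:R^-1) s -> all (fun b => 0 <= bh b <= 1) s ->
  all (fun b => 0 <= g (bw b)) s -> all (fun b => g (bw b) <= 1) s ->
  sorted (fun a b => g (bw b) <= g (bw a)) s ->
  (c - 1) * (\sum_(w <- gnf q c s) g w - 1) <=
    \sum_(b <- s) fk k (bl b) * g (bw b) * bh b.
Proof.
move=> q_range c_ge1 l_s h_s g0 g1 srt; have /andP [q_gt0 _] := q_range.
have q_pos : 0 < q%:R :> R by rewrite ltr0n.
rewrite -(ler_pM2l q_pos) mulrA; apply: le_trans (gnf_bound q_gt0 c_ge1 h_s g0 g1 srt) _.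
rewrite mulr_sumr big_seq [X in _ <= X]big_seq; apply: ler_sum => b bs.
have := fk_ge_inv q_range (allP l_s b bs); rewrite -[q%:R^-1]mulr1 ler_pdivrMl // => q_fk.
have := ler_wpM2r (mulr_ge0 (allP g0 b bs) (andP (allP h_s b bs)).1) q_fk.
by rewrite mul1r !mulrA.
Qed.

Lemma gnfdh_fk_bound k srtH c (g : R -> R) s :
  (2 <= k)%N ->
  (forall s, perm_eq (srtH s) s /\ sorted (fun a b => bh b <= bh a) (srtH s)) ->
  1 <= c ->
  all (fun b => 0 < bl b <= k%:R^-1) s -> all (fun b => 0 <= bh b <= 1) s ->
  all (fun b => 0 <= g (bw b)) s -> all (fun b => g (bw b) <= 1) s ->
  sorted (fun a b => g (bw b) <= g (bw a)) s ->
  (c - 1) * (\sum_(w <- gnfdh srtH c s) g w - 1) <=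
    \sum_(b <- s) fk k (bl b) * g (bw b) * bh b.
Proof.
move=> k_ge2 srtH_spec c_ge1 l_s h_s g0 g1 srt.
have K1 : 1 < k%:R :> R by rewrite ltr1n.
have short_s : all (short k%:R) s.
  apply/allP => b bs; have /andP [l_gt0 l_le] := allP l_s b bs.
  have /andP [h0 _] := allP h_s b bs.
  by rewrite /short ltW //= h0 andbT -ler_pdivlMl ?mulr1 // (lt_trans ltr01 K1).
have h1 : all (fun b => bh b <= 1) s by apply/allP => b /(allP h_s) /andP [].
have gnfdh_le := gnfdh_bound srtH_spec c_ge1 (ltW K1) short_s h1 g0 g1 srt.
have K1_pos : 0 < k%:R - 1 :> R by rewrite subr_gt0.
rewrite -(ler_pM2l K1_pos) mulrA; apply: le_trans gnfdh_le _.
rewrite !mulr_sumr le_eqVlt; apply/orP; left; apply/eqP.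
rewrite big_seq [RHS]big_seq; apply: eq_bigr => b bs.
have /andP [l_gt0 l_le] := allP l_s b bs.
by rewrite fk_small //; field; rewrite subr_eq0 gt_eqF.
Qed.

Lemma mem_group k (L : seq (box R)) q b : b \in group k L q =
  (b \in L) && (if (q < k)%N then q.+1%:R^-1 < bl b <= q%:R^-1 else bl b <= k%:R^-1).
Proof. by rewrite /group; case: ifP; rewrite mem_filter andbC. Qed.

Definition group_index (k : nat) (x : R) : nat := minn k (Num.truncn x^-1).

Lemma group_index_range k (x : R) :
  (1 <= k)%N -> 0 < x <= 1 -> (1 <= group_index k x <= k)%N.
Proof.
move=> k_gt0 /andP [x_gt0 x_le1]; rewrite /group_index geq_minl leq_min k_gt0.
by rewrite truncn_gt0 invf_ge1 // x_le1.
Qed.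

Lemma group_filterE k (L : seq (box R)) q :
  (1 <= q <= k)%N -> {in L, forall b, 0 < bl b <= 1} ->
  group k L q = [seq b <- L | q == group_index k (bl b)].
Proof.
move=> /andP [q_gt0 le_qk] L01; rewrite /group /group_index.
have inv_ge0 b : b \in L -> 0 <= (bl b)^-1.
  by move=> /L01 /andP [l_gt0 _]; rewrite invr_ge0 ltW.
case: ifP => [lt_qk | ge_qk]; apply: eq_in_filter => b bL; have /andP [l_gt0 _] := L01 b bL.
  rewrite invf_plt ?posrE ?ltr0n // invf_pge ?posrE ?ltr0n // andbC -truncn_eq ?inv_ge0 //.
  by move: (Num.truncn _) => n; apply/eqP/eqP => ?; lia.
have -> : q = k by apply/eqP; rewrite eqn_leq le_qk leqNgt ge_qk.
rewrite invf_pge ?posrE ?ltr0n -?truncn_ge_nat ?inv_ge0 //; last by apply: leq_trans q_gt0 _.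
by move: (Num.truncn _) => n; apply/idP/eqP => ?; lia.
Qed.

Lemma sum_groups k (L : seq (box R)) (F : box R -> R) :
  (1 <= k)%N -> {in L, forall b, 0 < bl b <= 1} ->
  \sum_(1 <= q < k.+1) \sum_(b <- group k L q) F b = \sum_(b <- L) F b.
Proof.
move=> k_gt0 L01; rewrite big_seq.
under eq_bigr => q q_in.
  rewrite mem_index_iota ltnS in q_in; rewrite (group_filterE q_in L01) big_filter.
over.
rewrite -big_seq (exchange_big_dep predT) //= [LHS]big_seq [RHS]big_seq.
apply: eq_bigr => b bL.
have idx_in : group_index k (bl b) \in index_iota 1 k.+1.
  by rewrite mem_index_iota ltnS group_index_range // L01.
by rewrite -big_filter filter_pred1_uniq ?iota_uniq // big_seq1.
Qed.

Lemma gnf_aux_sub i (c : R) s j cur :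
  {subset gnf_aux i c s j cur <= [seq bw b | b <- s]}.
Proof.
elim: s j cur => [//|x s IH] j cur w /=; rewrite inE.
case: ifP => _; first by move/IH ->; rewrite orbT.
case: ifP => _; first by move/IH ->; rewrite orbT.
by rewrite inE => /orP [->|/IH ->]; rewrite ?orbT.
Qed.

Lemma gnfdh_aux_sub srtH (c : R) fuel s :
  {subset gnfdh_aux srtH c fuel s <= [seq bw b | b <- s]}.
Proof.
elim: fuel s => [|fuel IH] [|x s] w //=; rewrite !inE => /orP [-> //|/IH].
by rewrite map_drop => /mem_drop.
Qed.

Section Segments.
Variables (srtW srtH : seq (box R) -> seq (box R)) (k c : nat) (L : seq (box R)).
Hypothesis srtW_perm : forall s, perm_eq (srtW s) s.

Lemma segments_sub q : {subset segments srtW srtH k c L q <= [seq bw b | b <- L]}.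
Proof.
move=> w; rewrite /segments.
have sub_seg : w \in (if (q < k)%N then gnf q c%:R (srtW (group k L q))
                     else gnfdh srtH c%:R (srtW (group k L q))) ->
               w \in [seq bw b | b <- srtW (group k L q)].
  case: ifP => _; last exact: gnfdh_aux_sub.
  by case: (srtW _) => [//|x s]; rewrite /= !inE => /orP [->|/gnf_aux_sub ->]; rewrite ?orbT.
move/sub_seg; rewrite (perm_mem (perm_map (@bw R) (srtW_perm _))) => /mapP [b].
by rewrite mem_group => /andP [bL _] ->; apply: map_f.
Qed.

Lemma segments_gt0 q :
  (0 < size (group k L q))%N -> (0 < size (segments srtW srtH k c L q))%N.
Proof.
by rewrite /segments -(perm_size (srtW_perm _)); case: (srtW _) => [//|x s] _; case: ifP.
Qed.

Lemma IL_sizes_le1 : {in L, forall b, bw b <= 1} ->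
  {in sizes (IL srtW srtH k c L), forall w, w <= 1}.
Proof.
move=> w_le1 w; rewrite /sizes mem_sort mem_undup => /flatten_mapP [q _].
by move/segments_sub => /mapP [b bL ->]; exact: w_le1.
Qed.

Lemma IL_sizes_gt0 b : (1 <= k)%N -> {in L, forall b, 0 < bl b <= 1} -> b \in L ->
  (0 < size (sizes (IL srtW srtH k c L)))%N.
Proof.
move=> k_gt0 L01 bL; set q := group_index k (bl b).
have q_range : (1 <= q <= k)%N by apply: group_index_range; rewrite ?L01.
have : (0 < size (segments srtW srtH k c L q))%N.
  apply: segments_gt0; rewrite (group_filterE q_range L01) size_filter -has_count.
  by apply/hasP; exists b.
case E : (segments _ _ _ _ _ q) => [//|w ws] _.
have : w \in sizes (IL srtW srtH k c L).
  rewrite /sizes mem_sort mem_undup; apply/flatten_mapP; exists q; last by rewrite E mem_head.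
  by rewrite mem_iota add1n ltnS.
by case: (sizes _).
Qed.

Lemma IL_gfun_bounded pi :
  (1 <= k)%N -> {in L, forall b, 0 < bl b <= 1} -> {in L, forall b, bw b <= 1} ->
  dual_feasible (IL srtW srtH k c L) pi ->
  {in L, forall b, 0 <= gfun (IL srtW srtH k c L) pi (bw b) <= 1}.
Proof.
move=> k_gt0 L01 w_le1 feasible b bL.
have sizes_gt0 := IL_sizes_gt0 k_gt0 L01 bL.
have sizes_le1 := IL_sizes_le1 w_le1.
by rewrite gfun_ge0 ?gfun_le1.
Qed.

Lemma IL_gfun_homo pi :
  (1 <= k)%N -> {in L, forall b, 0 < bl b <= 1} -> {in L, forall b, bw b <= 1} ->
  dual_feasible (IL srtW srtH k c L) pi -> dual_nonincreasing (IL srtW srtH k c L) pi ->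
  {in L &, forall a b, bw a <= bw b ->
    gfun (IL srtW srtH k c L) pi (bw a) <= gfun (IL srtW srtH k c L) pi (bw b)}.
Proof.
move=> k_gt0 L01 w_le1 feasible noninc a b aL bL le_ab.
exact: gfun_homo feasible (IL_sizes_gt0 k_gt0 L01 bL) _ _ noninc le_ab (w_le1 b bL).
Qed.

Lemma segments_weight_bound (g : R -> R) q :
  (2 <= k)%N -> (1 <= c)%N -> (0 < q)%N ->
  {in L, forall b, 0 < bl b} -> {in L, forall b, 0 <= bh b <= 1} ->
  (forall s, sorted (fun a b => bw b <= bw a) (srtW s)) ->
  (forall s, perm_eq (srtH s) s /\ sorted (fun a b => bh b <= bh a) (srtH s)) ->
  {in L, forall b, 0 <= g (bw b) <= 1} ->
  {in L &, forall a b, bw a <= bw b -> g (bw a) <= g (bw b)} ->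
  (c%:R - 1) * (\sum_(w <- segments srtW srtH k c L q) g w - 1) <=
    \sum_(b <- group k L q) fk k (bl b) * g (bw b) * bh b.
Proof.
move=> k_ge2 c_ge1 q_gt0 l_gt0 h01 srtW_sorted srtH_spec g01 g_homo.
set s := srtW (group k L q).
rewrite -(perm_big _ (srtW_perm (group k L q))) -/s /segments -/s.
have s_group b : b \in s -> b \in group k L q by rewrite (perm_mem (srtW_perm _)).
have s_L b : b \in s -> b \in L by move/s_group; rewrite mem_group => /andP [].
have h_s : all (fun b => 0 <= bh b <= 1) s by apply/allP => b /s_L /h01.
have g0 : all (fun b => 0 <= g (bw b)) s by apply/allP => b /s_L /g01 /andP [].
have g1 : all (fun b => g (bw b) <= 1) s by apply/allP => b /s_L /g01 /andP [].
have srt : sorted (fun a b => g (bw b) <= g (bw a)) s.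
  apply: (@sub_in_sorted _ (mem L) _ _ _ _ _ (srtW_sorted _)).
    by move=> a b aL bL /=; apply: g_homo.
  by apply/allP => b /s_L.
have c1 : 1 <= c%:R :> R by rewrite ler1n.
case: ifP => [lt_qk | ge_qk].
  apply: gnf_fk_bound => //; first by rewrite q_gt0.
  by apply/allP => b /s_group; rewrite mem_group lt_qk => /andP [].
apply: gnfdh_fk_bound => //; apply/allP => b bs.
have := s_group b bs; rewrite mem_group ge_qk => /andP [bL ->].
by rewrite l_gt0.
Qed.

End Segments.

End Weighting.

Theorem lemma6 (R : realType) (k c : nat) (L : seq (box R))
  (srtW srtH : seq (box R) -> seq (box R)) (pi : nat -> R) :
  (2 <= k)%N -> (2 <= c)%N ->
  (forall b, b \in L ->
     [/\ 0 < bl b <= 1, 0 < bw b <= 1 & 0 < bh b <= 1]) ->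
  (forall s, perm_eq (srtW s) s /\ sorted (fun a b => bw b <= bw a) (srtW s)) ->
  (forall s, perm_eq (srtH s) s /\ sorted (fun a b => bh b <= bh a) (srtH s)) ->
  dual_feasible (IL srtW srtH k c L) pi ->
  dual_nonincreasing (IL srtW srtH k c L) pi ->
  let g := gfun (IL srtW srtH k c L) pi in
  Wgt k g L >
    (c%:R - 1) * \sum_(1 <= q < k.+1) \sum_(w <- segments srtW srtH k c L q) g w
    - c%:R * k%:R.
Proof.
move=> k_ge2 c_ge2 boxes srtW_spec srtH_spec feasible noninc /=.
set g := gfun _ pi.
have k_gt0 : (1 <= k)%N by apply: leq_trans k_ge2.
have L01 : {in L, forall b, 0 < bl b <= 1} by move=> b /boxes [].
have w_le1 : {in L, forall b, bw b <= 1} by move=> b /boxes [_ /andP []].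
have srtW_perm s := (srtW_spec s).1.
have groups_bound :
    \sum_(1 <= q < k.+1) (c%:R - 1) * (\sum_(w <- segments srtW srtH k c L q) g w - 1)
    <= \sum_(1 <= q < k.+1) \sum_(b <- group k L q) fk k (bl b) * g (bw b) * bh b.
  rewrite big_seq [X in _ <= X]big_seq; apply: ler_sum => q.
  rewrite mem_index_iota => /andP [q_gt0 _].
  apply: segments_weight_bound => //; first exact: ltnW.
  - by move=> b /boxes [/andP []].
  - by move=> b /boxes [_ _ /andP [/ltW -> ->]].
  - by move=> s; case: (srtW_spec s).
  - exact: IL_gfun_bounded.
  - exact: IL_gfun_homo.
rewrite /Wgt -(sum_groups _ k_gt0 L01); apply: lt_le_trans groups_bound.
rewrite -mulr_sumr sumrB sumr_const_nat subSS subn0 !mulrBr !mulrBl.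
have : 0 < k%:R :> R by rewrite ltr0n.
lra.
Qed.
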